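(* Let $n\ge3$ and $0<q<1$. For every relationship network $G$ on $V$ in which at least one of the three relation types is entirely absent (i.e. $\bigcup_{i}E_i=\varnothing$, or $\bigcup_iF_i=\varnothing$, or $\bigcup_iI_i=\varnothing$), the duples mechanism selects a needy agent with probability strictly greater than $q$: $P_D(G)>q$.
   Context: Let $V=\{1,\dots,n\}$. A relationship network $G$ assigns to every unordered pair of distinct agents exactly one of the symmetric relations friends, enemies, impartial; $F_j,E_j,I_j$ are the friends, enemies, impartials of $j$. Each agent is needy independently with probability $q$; $N$ is the random needy set; every agent $j$ reports truthfully $(N,F_j,E_j)$. Duples mechanism $g^D$: for agent $l$ and $j\ne l$, $\mathrm{lev}_l(j)=1,\dots,6$ according as $j\in F_l\cap N$, $F_l\setminus N$, $I_l\cap N$, $I_l\setminus N$, $E_l\cap N$, $E_l\setminus N$. For distinct $j,k$, agent $l\notin\{j,k\}$ votes for $j$ against $k$ if $\mathrm{lev}_l(j)<\mathrm{lev}_l(k)$ (abstains if equal); $x_{jk}$ counts these votes. $g^D_j(\{j,k\})=1,\tfrac12,0$ as $x_{jk}>,=,<x_{kj}$, $g^D_k(\{j,k\})=1-g^D_j(\{j,k\})$, and $g^D_i=\frac{2}{n(n-1)}\sum_{j\ne i}g^D_i(\{i,j\})$. $P_D(G)=\mathbb E[\sum_{i\in N}g^D_i]$ under truthful reports. *)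

From HB Require Import structures.
From mathcomp Require Import all_boot all_order all_algebra.
Set Implicit Arguments. Unset Strict Implicit. Unset Printing Implicit Defensive.
Import Order.TTheory GRing.Theory Num.Theory.
Local Open Scope ring_scope.

Inductive relkind := Friends | Enemies | Impartial.

(* Its values on the
   diagonal are irrelevant. j \in F_l <-> G l j = Friends, etc. *)
Definition network (n : nat) := 'I_n -> 'I_n -> relkind.

Definition symmetric_network n (G : network n) : Prop :=
  forall i j : 'I_n, i != j -> G i j = G j i.

Definition lev n (G : network n) (N : {set 'I_n}) (l j : 'I_n) : nat :=
  match G l j with
  | Friends => if j \in N then 1 else 2
  | Impartial => if j \in N then 3 else 4
  | Enemies => if j \in N then 5 else 6
  end%N.

Definition votes n (G : network n) (N : {set 'I_n}) (j k : 'I_n) : nat :=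
  #|[set l : 'I_n | (l != j) && (l != k) && (lev G N l j < lev G N l k)%N]|.

Definition gpair (R : realFieldType) n (G : network n) (N : {set 'I_n}) (j k : 'I_n) : R :=
  if (votes G N k j < votes G N j k)%N then 1
  else if votes G N j k == votes G N k j then 1 / 2%:R else 0.

Definition gD (R : realFieldType) n (G : network n) (N : {set 'I_n}) (i : 'I_n) : R :=
  (2%:R / (n * (n - 1))%:R) * \sum_(j : 'I_n | j != i) gpair R G N i j.

Definition probN (R : realFieldType) n (q : R) (N : {set 'I_n}) : R :=
  q ^+ #|N| * (1 - q) ^+ (n - #|N|).

Definition PD (R : realFieldType) n (q : R) (G : network n) : R :=
  \sum_(N : {set 'I_n}) probN q N * \sum_(i in N) gD R G N i.

Definition absent n (G : network n) (k : relkind) : Prop :=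
  forall i j : 'I_n, i != j -> G i j <> k.

From HB Require Import structures.
From mathcomp Require Import all_boot all_order all_algebra.
From mathcomp Require Import zify ring lra.
Import Order.TTheory GRing.Theory Num.Theory.
Set Implicit Arguments. Unset Strict Implicit. Unset Printing Implicit Defensive.

(* Group P_D(G) by ordered pairs of agents. For a pair {i, j}, the expected
   share going to a needy member is q + q(1-q)(a_ij + a_ji - 1), where a_ij is
   what i receives when i is needy and j is not. In that situation a voter l
   prefers j exactly when its relation to j is strictly better than to i, so
   a_ij + a_ji >= 1 always. When one relation kind is absent, these preferences
   are governed by a single symmetric relation E, and counting shows that some
   pair has a_ij + a_ji > 1: otherwise every pair would be split by at least
   (n-1)/2 voters, while the total number of splitting votes is
   sum_l deg(l) codeg(l) <= n (n-1)^2 / 4, forcing deg = codeg everywhere,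
   which a parity argument on n - 1 = 2 deg rules out. *)

Lemma sum_nat_bool (T : finType) (P : pred T) : \sum_x (P x : nat) = #|[set x | P x]|.
Proof. by rewrite -sum1dep_card [RHS]big_mkcond. Qed.

Lemma sum_neq1 n (i : 'I_n) : \sum_(l < n) (l != i : nat) = n.-1.
Proof.
rewrite sum_nat_bool -[n in RHS]card_ord -(cardsC1 i).
by apply: eq_card => l; rewrite !inE.
Qed.

Lemma sum_neq2 n (i j : 'I_n) : i != j ->
  \sum_(l < n) ((l != i) && (l != j) : nat) = n - 2.
Proof.
move=> ij; rewrite sum_nat_bool.
have := cardsC [set i; j]; rewrite cards2 ij card_ord => /(congr1 (subn^~ 2)).
by rewrite addKn => <-; apply: eq_card => l; rewrite !inE negb_or.
Qed.

Lemma big_offdiag_swap (V : Type) (idx : V) (op : Monoid.com_law idx) n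
    (F : 'I_n -> 'I_n -> V) :
  \big[op/idx]_(i < n) \big[op/idx]_(j < n | j != i) F j i =
  \big[op/idx]_(i < n) \big[op/idx]_(j < n | j != i) F i j.
Proof.
under eq_bigr => i _ do rewrite big_mkcond.
rewrite exchange_big; apply: eq_bigr => i _; rewrite [RHS]big_mkcond.
by apply: eq_bigr => j _; rewrite eq_sym.
Qed.

Section CrossCounts.

Variables (n : nat) (E : rel 'I_n).

Definition deg (l : 'I_n) : nat := \sum_x ((l != x) && E l x : nat).
Definition codeg (l : 'I_n) : nat := \sum_x ((l != x) && ~~ E l x : nat).
Definition cross (i j : 'I_n) : nat :=
  \sum_l [&& l != i, l != j, E l j & ~~ E l i].

Lemma deg_add_codeg l : deg l + codeg l = n.-1.
Proof.
rewrite -big_split -(sum_neq1 l); apply: eq_bigr => x _ /=.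
by rewrite eq_sym; case: (x != l); case: (E l x).
Qed.

Lemma cross_pair_le (i j : 'I_n) : i != j -> cross i j + cross j i <= n - 2.
Proof.
move=> ij; rewrite -(sum_neq2 ij) -big_split; apply: leq_sum => l _ /=.
by case: (l != i); case: (l != j); case: (E l j); case: (E l i).
Qed.

Lemma sum_cross : \sum_i \sum_(j | j != i) cross i j = \sum_l deg l * codeg l.
Proof.
rewrite /cross; under eq_bigr => i _ do rewrite exchange_big.
rewrite exchange_big; apply: eq_bigr => l _.
rewrite /deg /codeg mulnC big_distrl; apply: eq_bigr => i _.
rewrite big_distrr big_mkcond; apply: eq_bigr => j _ /=.
case: (eqVneq j i) => [->|_]; first by case: (E l i); rewrite ?andbF ?muln0.
by case: (l != i); case: (l != j); case: (E l j); case: (E l i).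
Qed.

(* Summing the hypothesis over ordered pairs gives n (n-1)^2 <= 4 sum_l deg l codeg l,
   which is the equality case of AM-GM at every vertex. *)
Lemma balanced_of_spread :
    (forall i j, i != j -> n.-1 <= 2 * (cross i j + cross j i)) ->
  forall l, deg l = codeg l.
Proof.
move=> spread l.
have agm := leqif_sum (fun l (_ : true) => nat_AGM2 (deg l) (codeg l)).
apply/eqP; move: l; apply/forallP; rewrite -(geq_leqif agm).
under eq_bigr do rewrite deg_add_codeg.
have -> : \sum_(i < n) n.-1 ^ 2 = \sum_(i < n) \sum_(j < n | j != i) n.-1.
  apply: eq_bigr => i _; rewrite sum_nat_cond_const -(sum_neq1 i) sum_nat_bool.
  by rewrite mulnn.
have -> : \sum_l 4 * (deg l * codeg l) =
    \sum_(i < n) \sum_(j < n | j != i) 2 * (cross i j + cross j i).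
  rewrite -big_distrr /= -sum_cross.
  under [RHS]eq_bigr => i _ do rewrite -big_distrr big_split /=.
  rewrite -[RHS]big_distrr big_split /= [X in _ + X]big_offdiag_swap.
  by rewrite addnn -mul2n mulnA.
by apply: leq_sum => i _; apply: leq_sum => j ji; apply: spread; rewrite eq_sym.
Qed.

Hypothesis E_sym : forall i j, i != j -> E i j = E j i.

Definition common (i j : 'I_n) : nat :=
  \sum_l [&& l != i, l != j, E l j & E l i].

Lemma cross_add_common (i j : 'I_n) :
  i != j -> cross i j + common i j + E i j = deg j.
Proof.
move=> ij.
have -> : deg j = \sum_x ((x != j) && E x j : nat).
  apply: eq_bigr => x _; case: (eqVneq x j) => [->|xj] //=.
  by rewrite E_sym // eq_sym.
have -> : (E i j : nat) = \sum_x ((x == i) && E x j : nat).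
  by rewrite (bigD1 i) //= eqxx big1 ?addn0 // => x /negbTE ->.
rewrite -!big_split; apply: eq_bigr => x _ /=.
case: (eqVneq x i) => [->|_] /=; first by rewrite ij.
by case: (x != j); case: (E x j); case: (E x i).
Qed.

Lemma cross_sym (i j : 'I_n) : i != j -> deg i = deg j -> cross i j = cross j i.
Proof.
move=> ij dij; have := cross_add_common ij; rewrite eq_sym in ij.
have := cross_add_common ij; rewrite E_sym // dij.
have -> : common j i = common i j.
  apply: eq_bigr => l _.
  by case: (l != i); case: (l != j); case: (E l i); case: (E l j).
lia.
Qed.

Lemma exists_balanced_pair : 3 <= n -> exists i j : 'I_n,
  [/\ i != j, 2 * cross i j <= n - 2, 2 * cross j i <= n - 2
    & cross i j + cross j i <= n - 3].
Proof.
move=> n3.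
pose good i j := [&& i != j, 2 * cross i j <= n - 2, 2 * cross j i <= n - 2
                   & cross i j + cross j i <= n - 3].
have [/existsP[i /existsP[j /and4P[]]]|no_good] := boolP [exists i, exists j, good i j].
  by exists i, j.
have spread i j : i != j -> n.-1 <= 2 * (cross i j + cross j i).
  move=> ij; apply: contraNT no_good; rewrite -ltnNge => small.
  apply/existsP; exists i; apply/existsP; exists j; apply/and4P; split=> //; lia.
have bal := balanced_of_spread spread.
pose i0 : 'I_n := Ordinal (ltnW (ltnW n3)); pose j0 : 'I_n := Ordinal (ltnW n3).
have ij0 : i0 != j0 by [].
(* [n - 1] is even, so [n - 2] is odd and the balanced bound is strict. *)
have d_half : (deg i0).*2 = n.-1 by rewrite -addnn {2}bal deg_add_codeg.
have dij : deg i0 = deg j0.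
  by have := bal j0; have := deg_add_codeg j0; lia.
have := cross_pair_le ij0; rewrite -(cross_sym ij0 dij) => le.
case/negP: no_good; apply/existsP; exists i0; apply/existsP; exists j0.
rewrite /good ij0 -(cross_sym ij0 dij) /=; apply/and3P; split; lia.
Qed.

End CrossCounts.

Definition rank (t : relkind) : nat :=
  match t with Friends => 0 | Impartial => 1 | Enemies => 2 end.

Lemma levE n (G : network n) (N : {set 'I_n}) (l x : 'I_n) :
  lev G N l x = if x \in N then (2 * rank (G l x)).+1 else (2 * rank (G l x)).+2.
Proof. by rewrite /lev; case: (G l x); case: (x \in N). Qed.

Definition prefer_count n (G : network n) (i j : 'I_n) : nat :=
  \sum_l [&& l != i, l != j & rank (G l j) < rank (G l i)].

Lemma votes_needy_idle n (G : network n) (N : {set 'I_n}) (i j : 'I_n) :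
  i \in N -> j \notin N -> i != j ->
  votes G N j i = prefer_count G i j /\ votes G N i j = n - 2 - prefer_count G i j.
Proof.
move=> iN jN ij.
have vji : votes G N j i = prefer_count G i j.
  rewrite /votes -sum_nat_bool; apply: eq_bigr => l _; rewrite !levE iN (negbTE jN).
  by rewrite [(l != j) && _]andbC; case: (l != i); case: (l != j) => //=; lia.
split=> //; rewrite -vji -(sum_neq2 ij) /votes -!sum_nat_bool -sumnB.
  apply: eq_bigr => l _; rewrite !levE iN (negbTE jN).
  by case: (l != i); case: (l != j) => //=; lia.
by move=> l _; rewrite !levE iN (negbTE jN); case: (l != i); case: (l != j) => //=; lia.
Qed.

(* Once kind [a] is absent, comparing ranks of the two remaining kinds only
   asks whether a relation is the better one of them. *)
Definition best_remaining (a t : relkind) : bool :=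
  match a, t with
  | Enemies, Friends | Friends, Impartial | Impartial, Friends => true
  | _, _ => false
  end.

Lemma prefer_count_cross n (G : network n) (a : relkind) : absent G a ->
  prefer_count G =2 cross (fun l x => best_remaining a (G l x)).
Proof.
move=> Ga i j; apply: eq_bigr => l _.
case: (eqVneq l i) => [//|li]; case: (eqVneq l j) => [//|lj] /=.
move: (Ga l i li) (Ga l j lj); clear Ga.
by case: a; case: (G l i); case: (G l j).
Qed.

Local Open Scope ring_scope.

Lemma sum_set_prod (R : comPzSemiRingType) (T : finType) (F : T -> bool -> R) :
  \sum_(N : {set T}) \prod_x F x (x \in N) = \prod_x (F x true + F x false).
Proof.
under [RHS]eq_bigr => x _ do rewrite -big_bool.
rewrite bigA_distr_bigA (reindex (fun f : {ffun T -> bool} => [set x | f x])) /=.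
  by apply: eq_bigr => f _; apply: eq_bigr => x _; rewrite inE.
exists (fun N : {set T} => [ffun x => x \in N]) => [f _|N _].
  by apply/ffunP => x; rewrite ffunE inE.
by apply/setP => x; rewrite inE ffunE.
Qed.

Section NeedyDistribution.

Variables (R : realFieldType) (n : nat) (q : R).

Definition bern (b : bool) : R := if b then q else 1 - q.

Lemma probN_prod (N : {set 'I_n}) : probN q N = \prod_x bern (x \in N).
Proof.
rewrite /probN (bigID (mem N)) /=.
rewrite [X in _ = X * _](eq_bigr (fun _ => q)) => [|x ->] //.
rewrite [X in _ = _ * X](eq_bigr (fun _ => 1 - q)) => [|x /negbTE ->] //.
rewrite !prodr_const; congr (_ * _ ^+ _).
by rewrite -[n in (n - _)%N]card_ord -(cardC N) addKn.
Qed.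

Lemma sum_probN_pair (i j : 'I_n) (u v : bool) : i != j ->
  \sum_(N : {set 'I_n}) probN q N * (((i \in N) == u)%:R * ((j \in N) == v)%:R)
  = bern u * bern v.
Proof.
move=> ij.
pose F x b :=
  bern b * (if x == i then (b == u)%:R else if x == j then (b == v)%:R else 1).
transitivity (\sum_(N : {set 'I_n}) \prod_x F x (x \in N)).
  apply: eq_bigr => N _; rewrite probN_prod /F big_split /=; congr (_ * _).
  rewrite (bigD1 i) //= (bigD1 j) 1?eq_sym //= eqxx (eq_sym j i) (negbTE ij) eqxx.
  by rewrite big1 ?mulr1 // => x /andP[/negbTE -> /negbTE ->].
rewrite sum_set_prod (bigD1 i) //= (bigD1 j) 1?eq_sym //=.
rewrite big1 => [|x /andP[/negbTE xi /negbTE xj]].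
  rewrite /F eqxx (eq_sym j i) (negbTE ij) eqxx /bern; clear F.
  by case: u; case: v; rewrite /= ?mulr1 ?mulr0 ?addr0 ?add0r.
by rewrite /F xi xj /bern !mulr1 addrC subrK.
Qed.

End NeedyDistribution.

Section PairGain.

Variable R : realFieldType.

Definition share (a b : nat) : R :=
  if (b < a)%N then 1 else if a == b then 1 / 2%:R else 0.

Lemma gpairE n (G : network n) (N : {set 'I_n}) (j k : 'I_n) :
  gpair R G N j k = share (votes G N j k) (votes G N k j).
Proof. by []. Qed.

Lemma share_add_swap a b : share a b + share b a = 1.
Proof. by rewrite /share; case: ltngtP => _; rewrite ?addr0 ?add0r //; lra. Qed.

Lemma share_pair_ge1 m y y' : (y + y' <= m)%N ->
  1 <= share (m - y) y + share (m - y') y'.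
Proof.
move=> le; rewrite /share.
by case: (ltnP y (m - y)) => ?; case: (eqVneq (m - y)%N y) => ?;
  case: (ltnP y' (m - y')) => ?; case: (eqVneq (m - y')%N y') => ?;
  try lra; exfalso; lia.
Qed.

Lemma share_pair_gt1 m y y' :
  (2 * y <= m)%N -> (2 * y' <= m)%N -> (y + y' < m)%N ->
  1 < share (m - y) y + share (m - y') y'.
Proof.
move=> ? ? ?; rewrite /share.
by case: (ltnP y (m - y)) => ?; case: (eqVneq (m - y)%N y) => ?;
  case: (ltnP y' (m - y')) => ?; case: (eqVneq (m - y')%N y') => ?;
  try lra; exfalso; lia.
Qed.

Variable n : nat.
Implicit Types (G : network n) (q : R).

Definition needy_share G (i j : 'I_n) : R :=
  share (n - 2 - prefer_count G i j) (prefer_count G i j).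

Lemma gpair_needy_idle G (N : {set 'I_n}) (i j : 'I_n) :
  i \in N -> j \notin N -> i != j -> gpair R G N i j = needy_share G i j.
Proof.
move=> iN jN ij; have [vji vij] := votes_needy_idle G iN jN ij.
by rewrite gpairE vji vij.
Qed.

Definition pair_gain q G (i j : 'I_n) : R :=
  \sum_(N : {set 'I_n}) probN q N * ((i \in N)%:R * gpair R G N i j).

(* Both needy: the two shares add up to 1; exactly one needy: it gets its
   needy share; weights q^2 and q (1 - q). *)
Lemma pair_gain_add q G (i j : 'I_n) : i != j ->
  pair_gain q G i j + pair_gain q G j i =
  q + q * (1 - q) * (needy_share G i j + needy_share G j i - 1).
Proof.
move=> ij; have ji : j != i by rewrite eq_sym.
pose w (u v : bool) N := probN q N * (((i \in N) == u)%:R * ((j \in N) == v)%:R).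
transitivity (\sum_N (w true true N + needy_share G i j * w true false N
                      + needy_share G j i * w false true N)).
  rewrite -big_split; apply: eq_bigr => N _; rewrite /w.
  case iN: (i \in N); case jN: (j \in N);
    rewrite /= !(mul1r, mul0r, mulr1, mulr0, addr0, add0r) //.
  - by rewrite -mulrDr !gpairE share_add_swap mulr1.
  - by rewrite (gpair_needy_idle G iN) ?jN // mulrC.
  - by rewrite (gpair_needy_idle G jN) ?iN // mulrC.
by rewrite !big_split /= -!mulr_sumr /w !sum_probN_pair // /bern; ring.
Qed.

Lemma PD_pair_gain q G : PD q G =
  2%:R / (n * (n - 1))%:R * \sum_i \sum_(j | j != i) pair_gain q G i j.
Proof.
pose c : R := 2%:R / (n * (n - 1))%:R.
transitivity (\sum_(N : {set 'I_n}) \sum_i \sum_(j | j != i)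
                c * (probN q N * ((i \in N)%:R * gpair R G N i j))).
  apply: eq_bigr => N _; rewrite big_mkcond mulr_sumr; apply: eq_bigr => i _.
  rewrite /gD; case: (i \in N) => /=.
    by rewrite mulrCA !mulr_sumr; apply: eq_bigr => j _; rewrite mul1r.
  by rewrite mulr0 big1 // => j _; rewrite mul0r !mulr0.
rewrite exchange_big mulr_sumr; apply: eq_bigr => i _.
by rewrite exchange_big mulr_sumr; apply: eq_bigr => j _; rewrite mulr_sumr.
Qed.

Lemma sum_offdiag_const (x : R) :
  \sum_(i < n) \sum_(j < n | j != i) x = (n * (n - 1))%:R * x.
Proof.
rewrite (eq_bigr (fun _ => x *+ n.-1)) => [|i _].
  by rewrite sumr_const card_ord -mulrnA mulr_natl mulnC subn1.
by rewrite sumr_const -[in RHS](card_ord n) -(cardC1 i).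
Qed.

Definition excess G : R :=
  \sum_i \sum_(j | j != i) (needy_share G i j + needy_share G j i - 1).

Lemma PD_excess q G : (1 < n)%N ->
  PD q G = q + q * (1 - q) * excess G / (n * (n - 1))%:R.
Proof.
move=> n_gt1; rewrite PD_pair_gain.
set S := \sum_i \sum_(j | j != i) pair_gain q G i j.
have S_swap : S = \sum_i \sum_(j | j != i) pair_gain q G j i.
  exact: big_offdiag_swap _ (fun i j => pair_gain q G j i).
have twoS : S + S = (n * (n - 1))%:R * q + q * (1 - q) * excess G.
  rewrite {2}S_swap /S -big_split /=.
  under eq_bigr => i _ do rewrite -big_split /=.
  under eq_bigr => i _ do under eq_bigr => j ji do rewrite pair_gain_add 1?eq_sym //.
  rewrite /excess mulr_sumr -sum_offdiag_const -big_split /=.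
  by apply: eq_bigr => i _; rewrite mulr_sumr -big_split.
have -> : S = (S + S) / 2%:R by field.
by rewrite twoS; field; rewrite !pnatr_eq0; lia.
Qed.

Lemma excess_gt0 G (a : relkind) :
  (3 <= n)%N -> symmetric_network G -> absent G a -> 0 < excess G.
Proof.
move=> n3 G_sym Ga; pose E l x := best_remaining a (G l x).
have E_sym i j : i != j -> E i j = E j i by move=> ij; rewrite /E G_sym.
have cnt := prefer_count_cross Ga.
have pair_ge0 i j : i != j -> 0 <= needy_share G i j + needy_share G j i - 1.
  by move=> ij; rewrite subr_ge0 /needy_share !cnt share_pair_ge1 ?cross_pair_le.
have [i0 [j0 [ij0 c1 c2 c3]]] := exists_balanced_pair E_sym n3.
have pair_gt0 : 0 < needy_share G i0 j0 + needy_share G j0 i0 - 1.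
  by rewrite subr_gt0 /needy_share !cnt share_pair_gt1 // -/E; lia.
rewrite /excess (bigD1 i0) //= (bigD1 j0) 1?eq_sym //= -addrA.
apply: ltr_pwDl => //; apply: addr_ge0.
  by apply: sumr_ge0 => j /andP[ji _]; apply: pair_ge0; rewrite eq_sym.
by apply: sumr_ge0 => i _; apply: sumr_ge0 => j ji; apply: pair_ge0; rewrite eq_sym.
Qed.

End PairGain.

Theorem proposition3 (R : realFieldType) (n : nat) (q : R) (G : network n) :
  (3 <= n)%N -> 0 < q -> q < 1 ->
  symmetric_network G ->
  (absent G Enemies \/ absent G Friends \/ absent G Impartial) ->
  q < PD q G.
Proof.
move=> n3 q_gt0 q_lt1 G_sym absent_kind.
have [a Ga] : exists a, absent G a.
  by case: absent_kind => [|[|]] Ga; eexists; exact: Ga.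
rewrite PD_excess ?ltrDl; last exact: ltnW.
apply: divr_gt0; last by rewrite ltr0n muln_gt0; apply/andP; split; lia.
by rewrite mulr_gt0 ?mulr_gt0 ?subr_gt0 ?(excess_gt0 _ n3 G_sym Ga).
Qed.
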